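(* For every integer $k\geq 0$, every $(2k+1)$-strong tournament is $(k+2)^{*}$-weakly connected.
   Context: A tournament is a digraph in which each pair of distinct vertices is joined by exactly one arc. A digraph is $m$-strong if it has more than $m$ vertices and remains strongly connected after deleting any set of fewer than $m$ vertices (equivalently, for each ordered pair $x,y$ there are $m$ internally disjoint $(x,y)$-paths). For distinct vertices $u,v$ of a digraph $D$, a weak $k^{*}$-container between $u$ and $v$ is a set of $k$ internally disjoint paths, each of which is either a $(u,v)$-path or a $(v,u)$-path (different paths may have different directions), whose union contains every vertex of $D$. $D$ is $k^{*}$-weakly connected if there is a weak $k^{*}$-container between every two distinct vertices of $D$. *)

From mathcomp Require Import all_boot.
Set Implicit Arguments. Unset Strict Implicit. Unset Printing Implicit Defensive.

Section Digraphs.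
Variables (T : finType) (e : rel T).

Definition tournament : Prop :=
  (forall x, ~~ e x x) /\ (forall x y, x != y -> (e x y (+) e y x)).

Definition strong_avoiding (S : {set T}) : Prop :=
  forall x y, x \notin S -> y \notin S ->
    connect [rel a b | [&& e a b, a \notin S & b \notin S]] x y.

Definition m_strong (m : nat) : Prop :=
  m < #|T| /\ forall S : {set T}, #|S| < m -> strong_avoiding S.

Definition dipath (x y : T) (q : seq T) : bool :=
  if q is z :: q' then [&& z == x, path e x q', last x q' == y & uniq q]
  else false.

Definition weak_container (k : nat) (u v : T) (P : seq (seq T)) : Prop :=
  [/\ size P = k, uniq P,
      all (fun q => dipath u v q || dipath v u q) P,
      (forall i j x, i < j < k -> x \in nth [::] P i -> x \in nth [::] P j ->
          x = u \/ x = v)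
    & forall x : T, exists2 q, q \in P & x \in q].

Definition weakly_connected_star (k : nat) : Prop :=
  forall u v : T, u != v -> exists P, weak_container k u v P.

End Digraphs.

(* In a tournament that stays strong after deleting a set Z, two
   vertices u, v outside Z are joined, in one direction or the other, by a path
   with one or two inner vertices, all outside Z.  Choosing such paths one at a
   time and deleting the inner vertices of those already chosen (at most 2j < 2k+1
   vertices), we get k paths between u and v with disjoint interiors.  Deleting
   all their inner vertices (at most 2k) still leaves a strong tournament, which by
   Camion's theorem has a Hamiltonian cycle; through u and v it splits into a
   (u,v)-path and a (v,u)-path, and the k + 2 paths form a weak container. *)

From mathcomp Require Import all_boot zify.
Set Implicit Arguments. Unset Strict Implicit. Unset Printing Implicit Defensive.

Lemma path_exit (T : eqType) (r : rel T) (P : pred T) a p :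
  path r a p -> P a -> ~~ P (last a p) -> exists a' b', [/\ r a' b', P a' & ~~ P b'].
Proof.
elim: p a => [|b p IH] a /=; first by move=> _ ->.
case/andP=> rab pp Pa; case Pb: (P b); first exact: IH.
by move=> _; exists a, b; rewrite Pb.
Qed.

Definition interior (T : eqType) (u v : T) (q : seq T) : seq T :=
  [seq w <- q | (w != u) && (w != v)].

Lemma interiorC (T : eqType) (u v : T) q : interior u v q = interior v u q.
Proof. by apply: eq_filter => w; rewrite andbC. Qed.

Lemma mem_interior (T : eqType) (u v : T) q x :
  (x \in interior u v q) = [&& x != u, x != v & x \in q].
Proof. by rewrite mem_filter andbA. Qed.

Lemma interior_ends (T : eqType) (u v : T) s :
  u \notin s -> v \notin s -> interior u v (u :: rcons s v) = s.
Proof.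
move=> us vs; rewrite /interior /= eqxx filter_rcons eqxx andbF.
by apply/all_filterP/allP => w ws; apply/andP; split;
  [apply: contraNneq us | apply: contraNneq vs] => <-.
Qed.

Lemma mem_flatten_interior (T : eqType) (u v : T) L x :
  x \in flatten (map (interior u v) L) -> (x != u) && (x != v).
Proof. by case/flattenP => _ /mapP[q _ ->]; rewrite mem_interior => /and3P[-> ->]. Qed.

Lemma notin_uniq_flatten (S T : eqType) (f : S -> seq T) p L :
  all (fun q => f q != [::]) L -> uniq (flatten (map f (p :: L))) -> p \notin L.
Proof.
move=> nonempty; rewrite /= cat_uniq => /and3P[_ disj _]; apply/negP => pL.
move/allP: nonempty => /(_ p pL); case fp: (f p) => [|w r] // _.
case/hasP: disj; exists w; last by rewrite fp mem_head.
by apply/flattenP; exists (f p); [exact: map_f | rewrite fp mem_head].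
Qed.

Lemma uniq_flatten_map (S T : eqType) (f : S -> seq T) L :
  all (fun q => f q != [::]) L -> uniq (flatten (map f L)) -> uniq L.
Proof.
elim: L => [|q L IH] //= /andP[fq nonempty] uL.
rewrite (notin_uniq_flatten nonempty uL) IH //.
by move: uL; rewrite cat_uniq => /and3P[].
Qed.

Lemma nth_flatten_disjoint (T : eqType) (L : seq (seq T)) i j x :
  uniq (flatten L) -> i < j < size L ->
  x \in nth [::] L i -> x \in nth [::] L j -> False.
Proof.
elim: L i j => [|q L IH] [|i] [|j] //;
  rewrite -[flatten (q :: L)]/(q ++ flatten L) cat_uniq => /and3P[_ disj uL] /= ltij xi xj.
  case/hasP: disj; exists x => //; apply/flattenP.
  by exists (nth [::] L j) => //; apply: mem_nth.
exact: (IH i j).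
Qed.

Section Containers.
Variables (T : finType) (e : rel T).

Lemma dipath_cons x y q : dipath e x y q -> q = x :: behead q.
Proof. by case: q => // z q /and4P[/eqP->]. Qed.

Lemma uniq_interior_dipath x y q : dipath e x y q -> uniq (interior x y q).
Proof. by case: q => // z q /and4P[_ _ _ uq]; apply: filter_uniq. Qed.

Lemma cycle_split_dipaths c u v :
  uniq c -> cycle e c -> u \in c -> v \in c -> u != v ->
  exists p1 p2, [/\ dipath e u v p1, dipath e v u p2
    & perm_eq (u :: v :: interior u v p1 ++ interior u v p2) c].
Proof.
move=> uc cc uin vin uv; case: (rot_to uin) => i s Ec.
have vs : v \in s by move: vin; rewrite -(mem_rot i) Ec inE eq_sym (negbTE uv).
case/splitPr: vs Ec => s1 s2 Ec.
have := uc; rewrite -(rot_uniq i) Ec /= mem_cat inE cat_uniq /= !negb_or.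
case/and5P=> /and3P[us1 _ us2] u1 /andP[vs1 _] vs2 u2.
have := cc; rewrite -(rot_cycle i) Ec /cycle /= rcons_cat /= cat_path /=.
case/and3P=> ps1 elv ps2.
exists (u :: rcons s1 v), (v :: rcons s2 u); split.
- rewrite /dipath eqxx rcons_path ps1 elv last_rcons eqxx /= mem_rcons inE negb_or.
  by rewrite uv us1 rcons_uniq vs1.
- rewrite /dipath eqxx ps2 last_rcons eqxx /= mem_rcons inE negb_or eq_sym.
  by rewrite uv vs2 rcons_uniq us2.
rewrite interior_ends // interiorC interior_ends // perm_sym -(perm_rot i) Ec.
by rewrite perm_cons -cat1s perm_catCA.
Qed.

(* Only the paths of [sh] need inner vertices: [p1] and [p2] are told apart by
   their first vertex. *)
Lemma weak_container_of_interiors k u v p1 p2 sh :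
  u != v -> dipath e u v p1 -> dipath e v u p2 ->
  all (fun q => dipath e u v q || dipath e v u q) sh -> size sh = k ->
  all (fun q => interior u v q != [::]) sh ->
  uniq (flatten (map (interior u v) [:: p1, p2 & sh])) ->
  (forall x, x \in [:: u, v & flatten (map (interior u v) [:: p1, p2 & sh])]) ->
  weak_container e (k + 2) u v [:: p1, p2 & sh].
Proof.
move=> uv d1 d2 dsh size_sh nonempty uI cover.
have sh2 : size [:: p1, p2 & sh] = k + 2 by rewrite /= size_sh addn2.
have up1 : u \in p1 by rewrite (dipath_cons d1) mem_head.
have vp2 : v \in p2 by rewrite (dipath_cons d2) mem_head.
split => //.
- have flat : flatten (map (interior u v) [:: p1, p2 & sh])
      = interior u v p1 ++ interior u v p2 ++ flatten (map (interior u v) sh) by [].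
  have u1F : uniq (interior u v p1 ++ flatten (map (interior u v) sh)).
    by move: uI; rewrite flat uniq_catCA cat_uniq => /and3P[].
  have u2F : uniq (interior u v p2 ++ flatten (map (interior u v) sh)).
    by move: uI; rewrite flat cat_uniq => /and3P[].
  rewrite /= inE negb_or (notin_uniq_flatten nonempty u1F) (notin_uniq_flatten nonempty u2F).
  rewrite (uniq_flatten_map nonempty) ?andbT; last by move: u2F; rewrite cat_uniq => /and3P[].
  by rewrite (dipath_cons d1) (dipath_cons d2); apply/eqP => -[/eqP]; rewrite (negbTE uv).
- by rewrite /= d1 d2 orbT dsh.
- move=> i j x ltij xi xj.
  case: (eqVneq x u) => [|xu]; first by left.
  case: (eqVneq x v) => [|xv]; first by right.
  have [ltj ltjk] := andP ltij; rewrite -sh2 in ltjk.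
  have ltik := ltn_trans ltj ltjk.
  case: (nth_flatten_disjoint uI (i := i) (j := j) (x := x)); rewrite ?size_map ?ltj //.
    by rewrite (nth_map [::] _ _ ltik) mem_interior xu xv.
  by rewrite (nth_map [::] _ _ ltjk) mem_interior xu xv.
move=> x; move: (cover x); rewrite !inE => /or3P[/eqP->|/eqP->|].
- by exists p1; rewrite ?mem_head.
- by exists p2; rewrite ?inE ?eqxx ?orbT.
case/flattenP => _ /mapP[q qP ->]; rewrite mem_interior => /and3P[_ _ xq].
by exists q.
Qed.
End Containers.

Section Tournament.
Variables (T : finType) (e : rel T).
Hypothesis te : tournament e.

Lemma tournament_irr x : ~~ e x x.
Proof. by case: te. Qed.

Lemma arc_neq x y : e x y -> x != y.
Proof. by apply: contraTneq => ->; exact: tournament_irr. Qed.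

Lemma tournament_asym x y : e x y -> ~~ e y x.
Proof.
move=> exy; case: te => _ /(_ x y (arc_neq exy)).
by rewrite exy addTb.
Qed.

Lemma tournament_total x y : x != y -> ~~ e x y -> e y x.
Proof. by case: te => _ tot /tot + /negbTE nexy; rewrite nexy addFb. Qed.

Lemma strong_avoiding_exit (S : {set T}) (P : pred T) x y :
  strong_avoiding e S -> x \notin S -> y \notin S -> P x -> ~~ P y ->
  exists a b, [/\ e a b, a \notin S, b \notin S, P a & ~~ P b].
Proof.
move=> str xS yS Px Py; have /connectP[p pp yp] := str x y xS yS.
have := path_exit pp Px; rewrite -yp => /(_ Py)[a [b [/and3P[eab aS bS] Pa Pb]]].
by exists a, b.
Qed.

Lemma path_insert a w z p :
  path e a p -> e a w -> w \notin p -> z \in p -> e w z ->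
  exists p', [/\ path e a p', last a p' = last a p & perm_eq p' (w :: p)].
Proof.
elim: p a => [|b p IH] a //= /andP[eab pp] eaw.
rewrite inE negb_or => /andP[nwb nwp]; rewrite inE => zin ewz.
case ewb: (e w b); first by exists (w :: b :: p); split => //=; rewrite eaw ewb pp.
have ebw : e b w by rewrite tournament_total // ewb.
have zp : z \in p by case/orP: zin => [/eqP zb|//]; rewrite -zb ewz in ewb.
have [p' [pp' lp' pe]] := IH b pp ebw nwp zp ewz.
exists (b :: p'); split => /=; [by rewrite eab pp' | exact: lp' |].
by rewrite -(perm_cons b) in pe; rewrite (perm_trans pe) // (perm_catCA [:: b] [:: w]).
Qed.

Lemma cycle_insert c w y z :
  uniq c -> cycle e c -> w \notin c -> y \in c -> z \in c -> e y w -> e w z ->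
  exists c', [/\ uniq c', cycle e c' & perm_eq c' (w :: c)].
Proof.
move=> uc cc wc yc zc eyw ewz; case: (rot_to yc) => i s Ec.
have memc x : (x \in c) = (x \in y :: s) by rewrite -Ec mem_rot.
have ccr : path e y (rcons s y) by rewrite -[path _ _ _]/(cycle e (y :: s)) -Ec rot_cycle.
have [p' [pp lp pe]] : exists p', [/\ path e y p', last y p' = last y (rcons s y)
                                  & perm_eq p' (w :: rcons s y)].
  by apply: (path_insert (z := z)); rewrite // mem_rcons -memc.
case/lastP: p' pp lp pe => [|q y'] pp; first by move=> _ /perm_size.
rewrite !last_rcons => ey' pe; subst y'.
have pe' : perm_eq (y :: q) (w :: c).
  rewrite -(perm_rcons y) (perm_trans pe) // perm_cons perm_rcons.
  by rewrite -Ec perm_rot.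
exists (y :: q); split => //.
by rewrite (perm_uniq pe') /= wc.
Qed.

(* [head c0 s] is the successor of [c0] on the cycle. *)
Lemma cycle_bypass c0 s a b :
  uniq (c0 :: s) -> cycle e (c0 :: s) -> a \notin c0 :: s -> b \notin c0 :: s ->
  e c0 a -> e a b -> e b (head c0 s) ->
  uniq [:: c0, a, b & s] /\ cycle e [:: c0, a, b & s].
Proof.
move=> uc cc ac bc ec0a eab ebh; split.
  move: uc ac bc; rewrite /= !inE !negb_or => /andP[c0s ->] /andP[ac0 ->] /andP[bc0 ->].
  by rewrite eq_sym ac0 eq_sym bc0 c0s arc_neq.
rewrite /cycle /= ec0a eab /=; move: cc ebh; rewrite /cycle /=.
by case: s {uc ac bc} => [|y s] /= => [_ ->|/andP[_ ->] ->].
Qed.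

Definition cycle_avoiding (S : {set T}) (c : seq T) : Prop :=
  [/\ c != [::], uniq c, cycle e c & {subset c <= ~: S}].

Lemma cycle_avoiding_exists (S : {set T}) u v :
  strong_avoiding e S -> u \notin S -> v \notin S -> u != v ->
  exists c, cycle_avoiding S c.
Proof.
move=> str uS vS uv.
wlog euv : u v uS vS uv / e u v.
  move=> H; case euv: (e u v); first exact: (H u v).
  by apply: (H v u); rewrite // 1?eq_sym // (tournament_total uv) ?euv.
have /connectP[p pp] := str v u vS uS.
case: (shortenP pp) => p' pp' up' _ lp'.
have /andP[ep' ap'] : path e v p' && all (fun x => x \notin S) p'.
  by elim: p' v {vS uv euv pp up' lp'} pp' => //= a p' IH v /andP[/and3P[-> _ ->] /IH].
exists (v :: p'); split => //; first by rewrite /cycle rcons_path ep' -lp' euv.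
by move=> x; rewrite inE in_setC => /predU1P[->|/(allP ap')].
Qed.

Lemma bypass_arc (S : {set T}) c x :
  strong_avoiding e S -> c != [::] -> {subset c <= ~: S} ->
  (forall w, w \notin S -> w \notin c -> all (e^~ w) c || all (e w) c) ->
  x \notin S -> x \notin c ->
  exists a b, [/\ a \notin S, b \notin S, a \notin c, b \notin c
    & [/\ e a b, all (e^~ a) c & all (e b) c]].
Proof.
move=> str nc cS comparable xS xc.
have [c0 c0c] : exists c0, c0 \in c by case: (c) nc => // c0 s _; exists c0; exact: mem_head.
have c0S : c0 \notin S by rewrite -in_setC cS.
pose dominated := [pred w | (w \notin c) && all (e^~ w) c].
have dominating w : w \notin S -> w \notin c -> ~~ dominated w -> all (e w) c.
  by move=> wS wc nw; case/orP: (comparable w wS wc) => // win; case/negP: nw; exact/andP.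
case/orP: (comparable x xS xc) => [x_in|x_out].
  have [a [b [eab aS bS /andP[ac ain] nb]]] := strong_avoiding_exit (P := dominated)
    str xS c0S ltac:(by apply/andP) ltac:(by rewrite /= c0c).
  have bc : b \notin c by apply: contraL eab => /(allP ain); exact: tournament_asym.
  by exists a, b; split => //; split => //; exact: dominating.
have nx : ~~ all (e^~ x) c.
  by apply/allPn; exists c0 => //; apply: tournament_asym; exact: (allP x_out).
have [a [b [eab aS bS Pa /norP[bc nb]]]] :=
  strong_avoiding_exit (P := [pred w | (w \in c) || dominated w]) str c0S xS
    ltac:(by rewrite /= c0c) ltac:(by apply/norP; split => //; apply/nandP; right).
have bout := dominating b bS bc nb.
have ac : a \notin c by apply: contraL eab => /(allP bout); exact: tournament_asym.
exists a, b; split => //; split => //.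
by case/orP: Pa => [a_in | /andP[] //]; rewrite a_in in ac.
Qed.

(* Camion's argument: an outside vertex with an in- and an out-neighbour on the
   cycle can be inserted into it; otherwise every outside vertex dominates the
   cycle or is dominated by it, and an arc from a dominated to a dominating vertex
   (given by [bypass_arc]) replaces one arc of the cycle by a detour of length 3. *)
Lemma cycle_avoiding_grow (S : {set T}) c x :
  strong_avoiding e S -> cycle_avoiding S c -> x \notin S -> x \notin c ->
  exists2 c', cycle_avoiding S c' & size c < size c'.
Proof.
move=> str [nc uc cc cS] xS xc.
have notS y : y \in c -> y \notin S by rewrite -in_setC => /cS.
case: (boolP [exists w, [&& w \notin S, w \notin c, has (e^~ w) c & has (e w) c]]).
  case/existsP => w /and4P[wS wc /hasP[y yc eyw] /hasP[z zc ewz]].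
  have [c' [uc' cc' pc']] := cycle_insert uc cc wc yc zc eyw ewz.
  have szc' : size c' = (size c).+1 by rewrite (perm_size pc').
  exists c'; last by rewrite szc'.
  split => //; first by rewrite -size_eq0 szc'.
  by move=> t; rewrite (perm_mem pc') inE in_setC => /predU1P[->|/notS].
move/existsPn => no_insert.
have comparable w : w \notin S -> w \notin c -> all (e^~ w) c || all (e w) c.
  move=> wS wc; move: (no_insert w); rewrite wS wc /= negb_and.
  case/orP=> /hasPn nh; apply/orP; [right | left]; apply/allP => y yc;
    have yw : y != w by apply: contraNneq wc => <-.
  - by rewrite tournament_total // nh.
  - by rewrite tournament_total 1?eq_sym // nh.
have [a [b [aS bS ac bc [eab ain bout]]]] := bypass_arc str nc cS comparable xS xc.
case: c {no_insert comparable cS xc} nc uc cc notS ac bc ain bout => // c0 s _.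
move=> uc cc notS ac bc ain bout.
have ebh : e b (head c0 s).
  by apply: (allP bout); case: (s) => [|y s']; rewrite !inE eqxx ?orbT.
have [uc' cc'] := cycle_bypass uc cc ac bc (allP ain _ (mem_head _ _)) eab ebh.
exists [:: c0, a, b & s] => //; split => // y.
rewrite in_setC !inE => /or4P[/eqP->|/eqP->|/eqP->|ys] //;
  by apply: notS; rewrite inE ?eqxx ?ys ?orbT.
Qed.

Lemma strong_avoiding_hamiltonian (S : {set T}) u v :
  strong_avoiding e S -> u \notin S -> v \notin S -> u != v ->
  exists c, [/\ uniq c, cycle e c & forall x, (x \in c) = (x \notin S)].
Proof.
move=> str uS vS uv; have [c0 c0_avoiding] := cycle_avoiding_exists str uS vS uv.
have [n] := ubnP (#|T| - size c0); elim: n c0 c0_avoiding => // n IH c c_avoiding.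
case: (c_avoiding) => _ uc cc cS.
case: (pickP [pred x | (x \notin S) && (x \notin c)]) => [x /andP[xS xc] | full] lt_n.
  have [c' c'_avoiding lt_c'] := cycle_avoiding_grow str c_avoiding xS xc.
  apply: (IH c') => //; case: c'_avoiding => _ uc' _ _.
  have : size c' <= #|T| by rewrite -(card_uniqP uc') max_card.
  lia.
exists c; split => // x; apply/idP/idP => [/cS|xS]; first by rewrite in_setC.
by move: (full x); rewrite /= xS => /negbFE.
Qed.

Definition short_link (Z : {set T}) u v q : Prop :=
  [/\ dipath e u v q || dipath e v u q, interior u v q != [::],
      size (interior u v q) <= 2 & {subset interior u v q <= ~: Z}].

Lemma short_linkC (Z : {set T}) u v q : short_link Z u v q -> short_link Z v u q.
Proof. by rewrite /short_link interiorC orbC. Qed.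

Lemma short_link2 (Z : {set T}) u v x :
  x \notin Z -> u != v -> e u x -> e x v -> short_link Z u v [:: u; x; v].
Proof.
move=> xZ uv eux exv; have ux := arc_neq eux; have xv := arc_neq exv.
rewrite /short_link; have -> : interior u v [:: u; x; v] = [:: x].
  by rewrite /interior /= !eqxx andbF (eq_sym x) ux xv.
split => //; last by move=> y; rewrite inE in_setC => /eqP->.
by rewrite /dipath /= eqxx eux exv eqxx /= !inE negb_or ux uv xv.
Qed.

Lemma short_link3 (Z : {set T}) u v b c :
  b \notin Z -> c \notin Z -> u != v -> u != c -> b != v ->
  e u b -> e b c -> e c v -> short_link Z u v [:: u; b; c; v].
Proof.
move=> bZ cZ uv uc bv eub ebc ecv.
have ub := arc_neq eub; have bc := arc_neq ebc; have cv := arc_neq ecv.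
rewrite /short_link; have -> : interior u v [:: u; b; c; v] = [:: b; c].
  by rewrite /interior /= !eqxx andbF (eq_sym b) ub bv (eq_sym c) uc cv.
split => //; last by move=> y; rewrite in_setC !inE => /orP[] /eqP->.
rewrite /dipath /= eqxx eub ebc ecv eqxx /= !inE !negb_or.
by rewrite ub uc uv bc bv cv.
Qed.

Lemma short_link_exists (Z : {set T}) u v :
  strong_avoiding e Z -> u \notin Z -> v \notin Z -> u != v ->
  exists q, short_link Z u v q.
Proof.
move=> str uZ vZ uv.
wlog euv : u v uZ vZ uv / e u v.
  move=> H; case euv: (e u v); first exact: H.
  have vu : v != u by rewrite eq_sym.
  have [q link] := H v u vZ uZ vu (tournament_total uv (negbT euv)).
  by exists q; apply: short_linkC.
(* The first arc of a (v,u)-walk leaving {v} together with the common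
   out-neighbours of u and v yields the link. *)
pose P := [pred w | (w == v) || [&& w != u, e u w & e v w]].
have [a [b [eab aZ bZ Pa]]] := strong_avoiding_exit (P := P) str vZ uZ
  ltac:(by rewrite /= eqxx) ltac:(by rewrite /= eqxx (negbTE uv)).
rewrite /= negb_or => /andP[bv nb].
have vu : v != u by rewrite eq_sym.
have vb : v != b by rewrite eq_sym.
have ub : u != b.
  case/orP: Pa => [/eqP av | /and3P[_ eua _]]; apply: contraTneq eab => <-.
    by rewrite av tournament_asym.
  exact: tournament_asym.
rewrite eq_sym ub /= in nb.
case/orP: Pa => [/eqP av | /and3P[au _ eva]].
  subst a; rewrite eab andbT in nb.
  by exists [:: v; b; u]; apply/short_linkC/short_link2; rewrite // tournament_total.
case eub: (e u b).
  rewrite eub /= in nb.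
  by exists [:: u; b; v]; apply: short_link2; rewrite // tournament_total.
have ebu : e b u by rewrite tournament_total ?eub.
case evb: (e v b).
  by exists [:: v; b; u]; apply/short_linkC/short_link2.
have ebv : e b v by rewrite tournament_total ?evb.
by exists [:: v; a; b; u]; apply/short_linkC/short_link3.
Qed.

End Tournament.

Section ShortLinkFamilies.
Variables (T : finType) (e : rel T) (k : nat).
Hypotheses (te : tournament e) (ms : m_strong e (2 * k + 1)).
Variables (u v : T).
Hypothesis uv : u != v.

Lemma strong_avoiding_seq (s : seq T) : size s <= 2 * k -> strong_avoiding e [set x in s].
Proof. by move=> ss; apply: ms.2; rewrite cardsE addn1 ltnS (leq_trans (card_size s)). Qed.

Lemma notin_interiors sh :
  u \notin [set x in flatten (map (interior u v) sh)] /\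
  v \notin [set x in flatten (map (interior u v) sh)].
Proof. by rewrite !inE; split; apply/negP => /mem_flatten_interior; rewrite eqxx ?andbF. Qed.

Lemma short_link_family j : j <= k ->
  exists sh, [/\ size sh = j, all (fun q => dipath e u v q || dipath e v u q) sh,
    all (fun q => interior u v q != [::]) sh, uniq (flatten (map (interior u v) sh))
    & size (flatten (map (interior u v) sh)) <= 2 * j].
Proof.
elim: j => [|j IH] ltjk; first by exists [::].
have [sh [size_sh dsh nonempty uF sizeF]] := IH (ltnW ltjk).
have [uZ vZ] := notin_interiors sh.
have str := strong_avoiding_seq (leq_trans sizeF (leq_mul (leqnn 2) (ltnW ltjk))).
have [q [dq ne szq sub]] := short_link_exists te str uZ vZ uv.
exists (q :: sh); split => /=.
- by rewrite size_sh.
- by rewrite dq dsh.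
- by rewrite ne nonempty.
- rewrite cat_uniq uF andbT; apply/andP; split.
    by case/orP: dq => [/uniq_interior_dipath | /uniq_interior_dipath]; rewrite // interiorC.
  by apply/hasPn => w wF; apply/negP => /sub; rewrite in_setC inE wF.
by rewrite size_cat mulnS leq_add.
Qed.

End ShortLinkFamilies.

Theorem theorem2p7 (T : finType) (e : rel T) (k : nat) :
  tournament e -> m_strong e (2 * k + 1) -> weakly_connected_star e (k + 2).
Proof.
move=> te ms u v uv.
have [sh [size_sh dsh nonempty uF sizeF]] := short_link_family te ms uv (leqnn k).
set F := flatten _ in uF sizeF.
have [uZ vZ] := notin_interiors u v sh.
have [c [uc cc memc]] :=
  strong_avoiding_hamiltonian te (strong_avoiding_seq ms sizeF) uZ vZ uv.
have cF x : (x \in c) = (x \notin F) by rewrite memc inE.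
have [uc' vc'] : u \in c /\ v \in c by rewrite !memc.
have [p1 [p2 [d1 d2 pc]]] := cycle_split_dipaths uc cc uc' vc' uv.
set I := interior u v p1 ++ interior u v p2 in pc.
exists [:: p1, p2 & sh].
apply: weak_container_of_interiors d1 d2 dsh size_sh nonempty _ _ => //.
- change (uniq (interior u v p1 ++ interior u v p2 ++ F)).
  rewrite catA -/I cat_uniq uF andbT.
  have := uc; rewrite -(perm_uniq pc) /= => /and3P[_ _ ->] /=.
  apply/hasPn => x xF; apply/negP => xI.
  by move: (cF x); rewrite -(perm_mem pc) !inE xI xF !orbT.
move=> x; change (x \in [:: u, v & interior u v p1 ++ interior u v p2 ++ F]).
rewrite catA -/I !inE mem_cat.
case xF: (x \in F); first by rewrite !orbT.
by move: (cF x); rewrite -(perm_mem pc) !inE xF orbF => ->.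
Qed.
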